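(* Let $n\ge 2$ and let $(x_1,\dots,x_n)\in A_n$ be a point at which $S_n$ attains its maximum over $A_n$. Then $x_1-x_2\le 1$.
   Context: For an integer $n\ge 2$, $A_n$ is the set of integer vectors $(x_1,\dots,x_n)\in\mathbb{Z}^n$ such that $n\ge x_1\ge x_2\ge\cdots\ge x_n\ge 0$, $\sum_{i=1}^k x_i\le 2n+6k-16$ for every $k\in\{1,\dots,n\}$, and $\sum_{i=1}^n x_i\le 6n-12$. For an integer $m\ge 2$, $S_m:\mathbb{R}^m\to\mathbb{R}$ is defined by $S_m(x_1,\dots,x_m)=\sum_{i=1}^{m-1}\sum_{j=i+1}^{m} x_i x_j^2$. *)

From mathcomp Require Import all_boot all_order all_algebra.
Set Implicit Arguments. Unset Strict Implicit. Unset Printing Implicit Defensive.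
Import Order.TTheory GRing.Theory Num.Theory.
Local Open Scope ring_scope.

(* Vectors (x_1,...,x_n) are represented by functions x : nat -> int,
   1-indexed; only the values x 1, ..., x n matter. *)

Definition inA (n : nat) (x : nat -> int) : Prop :=
  [/\ x 1%N <= n%:Z,
      (forall i : nat, (1 <= i < n)%N -> x i.+1 <= x i),
      0 <= x n,
      (forall k : nat, (1 <= k <= n)%N ->
         \sum_(1 <= i < k.+1) x i <= 2 * n%:Z + 6 * k%:Z - 16)
    & \sum_(1 <= i < n.+1) x i <= 6 * n%:Z - 12].

Definition S (m : nat) (x : nat -> int) : int :=
  \sum_(1 <= i < m) \sum_(i.+1 <= j < m.+1) x i * x j ^+ 2.

From mathcomp Require Import all_boot all_order all_algebra zify ring lra.
Set Implicit Arguments. Unset Strict Implicit. Unset Printing Implicit Defensive.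
Import Order.TTheory GRing.Theory Num.Theory.
Local Open Scope ring_scope.

(* Suppose x maximises S_n over A_n but x_1 - x_2 >= 2.  Moving
   one unit from the first coordinate to the second gives a vector y with
   y_1 + y_2 = x_1 + x_2 and y_i = x_i for i >= 3.  All the constraints of A_n
   except x_1 <= n and the ordering of the first two entries only involve
   prefix sums of length >= 2 or coordinates of index >= 2, so y is still in
   A_n.  On the other hand S_n depends on the first two coordinates only
   through x_1 + x_2 (which is unchanged) and through the term x_1 x_2^2, so
   S_n y - S_n x = (x_1 - 1)(x_2 + 1)^2 - x_1 x_2^2, which is positive because
   x_2 >= 0 (the entries are nonincreasing down to x_n >= 0). *)

Definition tail_sq (n : nat) (x : nat -> int) : int :=
  \sum_(3 <= j < n.+1) x j ^+ 2.
Definition tail_S (n : nat) (x : nat -> int) : int :=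
  \sum_(3 <= i < n) \sum_(i.+1 <= j < n.+1) x i * x j ^+ 2.

Lemma S_head_decomposition (m : nat) (x : nat -> int) :
  S m.+2 x = x 1%N * x 2%N ^+ 2 + (x 1%N + x 2%N) * tail_sq m.+2 x
             + tail_S m.+2 x.
Proof.
rewrite /S /tail_sq /tail_S; case: m => [|m].
  by rewrite big_ltn // [X in X + _ = _]big_ltn // !big_geq // !mulr0 !addr0.
rewrite (@big_ltn _ _ _ 1%N m.+3) // [X in X + _ = _]big_ltn //.
by rewrite [X in _ + X = _]big_ltn // -!mulr_sumr; ring.
Qed.

Lemma S_head_exchange (n : nat) (x y : nat -> int) : (2 <= n)%N ->
  x 1%N + x 2%N = y 1%N + y 2%N -> (forall i, (3 <= i)%N -> x i = y i) ->
  S n y - S n x = y 1%N * y 2%N ^+ 2 - x 1%N * x 2%N ^+ 2.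
Proof.
case: n => [|[|m]] // _ h12 htail.
have hsq : tail_sq m.+2 y = tail_sq m.+2 x.
  by apply: eq_big_nat => i /andP [hi _]; rewrite htail.
have hS : tail_S m.+2 y = tail_S m.+2 x.
  apply: eq_big_nat => i /andP [hi _]; rewrite htail //.
  by apply: eq_big_nat => j /andP [hj _]; rewrite htail //; lia.
rewrite !S_head_decomposition hsq hS h12; ring.
Qed.

Lemma prefix_sum_exchange (x y : nat -> int) (k : nat) : (2 <= k)%N ->
  x 1%N + x 2%N = y 1%N + y 2%N -> (forall i, (3 <= i)%N -> x i = y i) ->
  \sum_(1 <= i < k.+1) x i = \sum_(1 <= i < k.+1) y i.
Proof.
move=> hk h12 htail.
rewrite !(@big_ltn _ _ _ 1%N) 1?ltnW // !(@big_ltn _ _ _ 2%N) // !addrA h12.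
by congr (_ + _); apply: eq_big_nat => i /andP [hi _]; apply: htail.
Qed.

Lemma inA_antitone (n : nat) (x : nat -> int) (i j : nat) : inA n x ->
  (1 <= i)%N -> (i <= j <= n)%N -> x j <= x i.
Proof.
case=> _ hmon _ _ _ hi; elim: j => [|j IH] /andP [hij hjn].
  by move: hi hij; case: i.
rewrite leq_eqVlt in hij; case/orP: hij => [/eqP <- // | hlt].
have hj : (1 <= j < n)%N by lia.
have hij' : (i <= j <= n)%N by lia.
exact: le_trans (hmon j hj) (IH hij').
Qed.

Lemma inA_second_ge0 (n : nat) (x : nat -> int) : (2 <= n)%N -> inA n x ->
  0 <= x 2%N.
Proof.
move=> hn hA; case: (hA) => _ _ hxn _ _.
have h2n : (2 <= n <= n)%N by rewrite hn leqnn.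
exact: le_trans hxn (inA_antitone hA (isT : (1 <= 2)%N) h2n).
Qed.

Definition transfer12 (x : nat -> int) : nat -> int :=
  fun i => if i == 1%N then x 1%N - 1
           else if i == 2%N then x 2%N + 1 else x i.

Lemma transfer12_tail (x : nat -> int) (i : nat) : (3 <= i)%N ->
  transfer12 x i = x i.
Proof. by case: i => [|[|[|i]]]. Qed.

Lemma transfer12_sum (x : nat -> int) :
  x 1%N + x 2%N = transfer12 x 1%N + transfer12 x 2%N.
Proof. by rewrite /transfer12 /=; ring. Qed.

Lemma transfer12_inA (n : nat) (x : nat -> int) : (2 <= n)%N -> inA n x ->
  2 <= x 1%N - x 2%N -> inA n (transfer12 x).
Proof.
move=> hn hA hgap; case: hA => h1 hmon hxn hpre htot.
have psum k : (2 <= k)%N ->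
    \sum_(1 <= i < k.+1) transfer12 x i = \sum_(1 <= i < k.+1) x i.
  by move=> hk; symmetry; apply: prefix_sum_exchange hk (transfer12_sum x) _ => i hi;
     rewrite transfer12_tail.
split.
- by rewrite /transfer12 /=; lra.
- move=> [|[|[|i]]] hi //.
  + by rewrite /transfer12 /=; lra.
  + rewrite transfer12_tail // /transfer12 /=.
    by apply: le_trans (hmon 2%N hi) _; lra.
  + by rewrite !transfer12_tail //; apply: hmon.
- rewrite /transfer12; case: eqP => [hn1 | _]; first by rewrite hn1 in hn.
  by case: eqP => [hn2 | _] //; rewrite hn2 in hxn; lra.
- move=> [|[|k]] hk //; last by rewrite psum //; apply: hpre.
  have := hpre 1%N hk; rewrite !big_nat1 /transfer12 /=; lra.
- by rewrite psum.
Qed.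

Lemma transfer12_increases_S (n : nat) (x : nat -> int) : (2 <= n)%N ->
  2 <= x 1%N - x 2%N -> 0 <= x 2%N -> S n x < S n (transfer12 x).
Proof.
move=> hn hgap hx2; rewrite -subr_gt0.
rewrite (S_head_exchange hn (transfer12_sum x)) => [|i hi]; last first.
  by rewrite transfer12_tail.
rewrite /transfer12 /=; nia.
Qed.

Theorem lemma6 (n : nat) (x : nat -> int) :
  (2 <= n)%N ->
  inA n x ->
  (forall y : nat -> int, inA n y -> S n y <= S n x) ->
  x 1%N - x 2%N <= 1.
Proof.
move=> hn hA hmax; rewrite leNgt; apply/negP => hgap.
have hgap2 : 2 <= x 1%N - x 2%N by [].
have := hmax _ (transfer12_inA hn hA hgap2).
by rewrite leNgt (transfer12_increases_S hn hgap2 (inA_second_ge0 hn hA)).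
Qed.
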